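(* There exists an absolute constant $C$ such that for all $t\in\mathbb N$ and all real $\vartheta$ with $\lvert\vartheta\rvert\le\pi$ we have $\|X_t(\vartheta)\|_\infty\le C\lvert\vartheta\rvert^3$.
   Context: Let $\mathsf r(n)$ be the number of (overlapping) occurrences of $\mathtt{11}$ in the binary expansion of $n\in\mathbb N=\{0,1,\dots\}$, and $d(t,n)=\mathsf r(n+t)-\mathsf r(n)$. Let $a_t(k)$, $b_t(k)$ be the asymptotic densities (which exist and form probability distributions on $\mathbb Z$) of $\{n:d(t,2n)=k\}$, $\{n:d(t,2n+1)=k\}$; let $m_t^\alpha,m_t^\beta$ be their means and $v_t^\alpha,v_t^\beta$ their variances. Write $\mathrm e(\vartheta)=\exp(i\vartheta)$. Define $\alpha^*_t(\vartheta)=\exp(m_t^\alpha i\vartheta-\frac12v_t^\alpha\vartheta^2)$, $\beta^*_t(\vartheta)=\exp(m_t^\beta i\vartheta-\frac12 v_t^\beta\vartheta^2)$ and $S^*_t(\vartheta)=(\alpha^*_{2t},\beta^*_{2t},\alpha^*_{2t+1},\beta^*_{2t+1},\alpha^*_{2t+2},\beta^*_{2t+2})^T(\vartheta)$. With $x=\mathrm e(\vartheta)$, define the $6\times6$ matrices \[ D_0(\vartheta)=\frac12\begin{pmatrix}1&1&0&0&0&0\\1&1&0&0&0&0\\1&x&0&0&0&0\\0&0&1&x^{-1}&0&0\\0&0&1&1&0&0\\0&0&x&x^{-1}&0&0\end{pmatrix},\quad D_1(\vartheta)=\frac12\begin{pmatrix}0&0&1&1&0&0\\0&0&x&x^{-1}&0&0\\0&0&x&1&0&0\\0&0&0&0&1&x^{-1}\\0&0&0&0&1&1\\0&0&0&0&1&1\end{pmatrix},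 \] and for $t\in\mathbb N$ let $X_{2t}(\vartheta)=S^*_{2t}(\vartheta)-D_0(\vartheta)S^*_t(\vartheta)$ and $X_{2t+1}(\vartheta)=S^*_{2t+1}(\vartheta)-D_1(\vartheta)S^*_t(\vartheta)$. Here $\|\cdot\|_\infty$ is the maximum norm on $\mathbb C^6$. *)

From Stdlib Require Import Reals Lra Lia ZArith Arith List.
From Coquelicot Require Import Coquelicot.
Import ListNotations.
Open Scope R_scope.

(* binary expansion of n (least significant bit first; 0 has empty expansion) *)
Fixpoint pbits (p : positive) : list bool :=
  match p with
  | xH => [true]
  | xO q => false :: pbits q
  | xI q => true :: pbits q
  end.
Definition bits (n : nat) : list bool :=
  match N.of_nat n with N0 => [] | Npos p => pbits p end.

Fixpoint count11 (l : list bool) : nat :=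
  match l with
  | a :: ((b :: _) as t) => ((if andb a b then 1 else 0) + count11 t)%nat
  | _ => 0%nat
  end.

Definition r (n : nat) : nat := count11 (bits n).

Definition d (t n : nat) : Z := (Z.of_nat (r (n + t)) - Z.of_nat (r n))%Z.

Definition density (P : nat -> bool) : R :=
  real (Lim_seq (fun N => INR (length (filter P (seq 0 N))) / INR N)).

Definition a_dens (t : nat) (k : Z) : R := density (fun n => Z.eqb (d t (2 * n)) k).
Definition b_dens (t : nat) (k : Z) : R := density (fun n => Z.eqb (d t (2 * n + 1)) k).

Definition zsum (f : Z -> R) : R :=
  Series (fun j => f (Z.of_nat j)) + Series (fun j => f (- Z.of_nat (S j))%Z).

Definition mean (p : Z -> R) : R := zsum (fun k => IZR k * p k).
Definition variance (p : Z -> R) : R := zsum (fun k => (IZR k - mean p) ^ 2 * p k).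

Definition m_alpha t := mean (a_dens t).
Definition m_beta t := mean (b_dens t).
Definition v_alpha t := variance (a_dens t).
Definition v_beta t := variance (b_dens t).

Definition ee (th : R) : C := (cos th, sin th).

Definition alpha_star (t : nat) (th : R) : C :=
  RtoC (exp (- / 2 * v_alpha t * th ^ 2)) * ee (m_alpha t * th).
Definition beta_star (t : nat) (th : R) : C :=
  RtoC (exp (- / 2 * v_beta t * th ^ 2)) * ee (m_beta t * th).

(* 6-vectors and 6x6 matrices as functions on indices 0..5 *)
Definition S_star (t : nat) (th : R) (i : nat) : C :=
  match i with
  | 0 => alpha_star (2 * t) th
  | 1 => beta_star (2 * t) th
  | 2 => alpha_star (2 * t + 1) th
  | 3 => beta_star (2 * t + 1) th
  | 4 => alpha_star (2 * t + 2) th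
  | _ => beta_star (2 * t + 2) th
  end.

Definition row6 (c0 c1 c2 c3 c4 c5 : C) (j : nat) : C :=
  match j with 0 => c0 | 1 => c1 | 2 => c2 | 3 => c3 | 4 => c4 | _ => c5 end.

Definition D0 (th : R) (i j : nat) : C :=
  let x := ee th in
  (/ 2 * match i with
   | 0 => row6 1 1 0 0 0 0 j
   | 1 => row6 1 1 0 0 0 0 j
   | 2 => row6 1 x 0 0 0 0 j
   | 3 => row6 0 0 1 (/ x) 0 0 j
   | 4 => row6 0 0 1 1 0 0 j
   | _ => row6 0 0 x (/ x) 0 0 j
   end)%C.

Definition D1 (th : R) (i j : nat) : C :=
  let x := ee th in
  (/ 2 * match i with
   | 0 => row6 0 0 1 1 0 0 j
   | 1 => row6 0 0 x (/ x) 0 0 j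
   | 2 => row6 0 0 x 1 0 0 j
   | 3 => row6 0 0 0 0 1 (/ x) j
   | 4 => row6 0 0 0 0 1 1 j
   | _ => row6 0 0 0 0 1 1 j
   end)%C.

Definition mv6 (M : nat -> nat -> C) (v : nat -> C) (i : nat) : C :=
  (M i 0%nat * v 0%nat + M i 1%nat * v 1%nat + M i 2%nat * v 2%nat
   + M i 3%nat * v 3%nat + M i 4%nat * v 4%nat + M i 5%nat * v 5%nat)%C.

Definition X (n : nat) (th : R) (i : nat) : C :=
  if Nat.even n
  then (S_star n th i - mv6 (D0 th) (S_star (Nat.div2 n) th) i)%C
  else (S_star n th i - mv6 (D1 th) (S_star (Nat.div2 n) th) i)%C.

Definition maxnorm6 (v : nat -> C) : R :=
  Rmax (Cmod (v 0%nat)) (Rmax (Cmod (v 1%nat)) (Rmax (Cmod (v 2%nat))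
    (Rmax (Cmod (v 3%nat)) (Rmax (Cmod (v 4%nat)) (Cmod (v 5%nat)))))).

From Stdlib Require Import Reals Lra Lia ZArith NArith Arith List.
From Coquelicot Require Import Coquelicot.
Open Scope R_scope.

(* Splitting n by parity, r(2n) = r(n) and r(2n+1) = r(n) + (n mod 2) make each of the laws
   a_{2s}, b_{2s}, a_{2s+1}, b_{2s+1} the equal-weight mixture of a_s and b_s (of a_{s+1} and
   b_{s+1} for b_{2s+1}), each shifted by at most one.  Hence the mean and variance of a child
   are those of the mixture, and every coordinate of X_t(θ) has the form
     G(M, V) - (e(c1 θ) G(m1, v1) + e(c2 θ) G(m2, v2)) / 2,   G(m, v) = exp(i m θ - v θ²/2),
   with (M, V) the moments of the mixture of the shifted parents.  Writing those parents as
   (M ± d, w ± e), this equals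
     G(M, w) (exp(-(dθ)²/2) - cos(dθ) cosh(eθ²/2) + i sin(dθ) sinh(eθ²/2)),
   which is O(|θ|³) uniformly for |d| <= 3/2 and |e| <= 1.  These bounds hold because the means
   are ±(t mod 2)/2 and the variances of a_t and b_t differ by at most 2. *)

(** * Elementary estimates *)

Lemma exp_le_inv_1_sub (y : R) : y < 1 -> exp y <= / (1 - y).
Proof.
  intro Hy.
  rewrite <- (Rinv_inv (exp y)), <- exp_Ropp.
  apply Rinv_le_contravar; [lra |].
  pose proof (exp_ineq1_le (- y)); lra.
Qed.

Lemma exp_neg_between (a : R) : 0 <= a -> 1 - a <= exp (- a) <= 1 - a + a ^ 2.
Proof.
  intro Ha. split; [pose proof (exp_ineq1_le (- a)); lra |].
  rewrite exp_Ropp.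
  apply Rle_trans with (/ (1 + a)); [apply Rinv_le_contravar; [lra | apply exp_ineq1_le] |].
  apply Rmult_le_reg_r with (1 + a); [lra |].
  rewrite Rinv_l by lra. nra.
Qed.

Lemma Rabs_exp_sub_1 (y : R) : Rabs y <= 1 / 2 -> Rabs (exp y - 1) <= 2 * Rabs y.
Proof.
  intro Hy. apply Rabs_le_between in Hy.
  pose proof (exp_ineq1_le y). pose proof (exp_le_inv_1_sub y ltac:(lra)).
  assert (/ (1 - y) - 1 <= 2 * Rabs y).
  { replace (/ (1 - y) - 1) with (y / (1 - y)) by (field; lra).
    apply Rmult_le_reg_r with (1 - y); [lra |].
    unfold Rdiv; rewrite Rmult_assoc, Rinv_l by lra.
    pose proof (Rle_abs y); pose proof (Rabs_pos y); nra. }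
  apply Rabs_le. pose proof (Rle_abs (- y)). rewrite Rabs_Ropp in *. lra.
Qed.

Lemma cosh_sub_1_between (y : R) : Rabs y <= 1 / 2 -> 0 <= cosh y - 1 <= 2 * y ^ 2.
Proof.
  intro Hy. apply Rabs_le_between in Hy. unfold cosh.
  pose proof (exp_ineq1_le y). pose proof (exp_ineq1_le (- y)).
  pose proof (exp_le_inv_1_sub y ltac:(lra)). pose proof (exp_le_inv_1_sub (- y) ltac:(lra)).
  split; [lra |].
  assert (/ (1 - y) + / (1 - - y) - 2 <= 4 * y ^ 2).
  { replace (/ (1 - y) + / (1 - - y) - 2) with (2 * y ^ 2 * / ((1 - y) * (1 + y))) by (field; lra).
    assert (/ ((1 - y) * (1 + y)) <= 2).
    { rewrite <- (Rinv_inv 2). apply Rinv_le_contravar; nra. }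
    pose proof (pow2_ge_0 y). nra. }
  lra.
Qed.

Lemma Rabs_sinh_le (y : R) : Rabs y <= 1 / 2 -> Rabs (sinh y) <= 2 * Rabs y.
Proof.
  intro Hy. unfold sinh.
  pose proof (Rabs_exp_sub_1 y Hy) as Hp.
  pose proof (Rabs_exp_sub_1 (- y) ltac:(rewrite Rabs_Ropp; lra)) as Hm.
  rewrite Rabs_Ropp in Hm.
  apply Rabs_le_between in Hp, Hm. apply Rabs_le. lra.
Qed.

Lemma Rabs_sin_le (x : R) : Rabs (sin x) <= Rabs x.
Proof.
  pose proof PI2_3_2. pose proof (SIN_bound x).
  assert (Hpos : forall u, 0 < u -> Rabs (sin u) <= u).
  { intros u Hu. pose proof (sin_lt_x u Hu). pose proof (SIN_bound u).
    apply Rabs_le. split; [| lra].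
    destruct (Rle_lt_dec 1 u); [lra |].
    pose proof (sin_gt_0 u Hu ltac:(lra)); lra. }
  destruct (Rtotal_order x 0) as [Hx | [-> | Hx]].
  - rewrite <- (Ropp_involutive x), sin_neg, !Rabs_Ropp, (Rabs_left x) by lra.
    apply Hpos; lra.
  - rewrite sin_0. lra.
  - rewrite (Rabs_right x) by lra. apply Hpos, Hx.
Qed.

Lemma cos_between (x : R) : Rabs x <= 1 -> 1 - x ^ 2 / 2 <= cos x <= 1 - x ^ 2 / 2 + x ^ 4 / 24.
Proof.
  intro Hx. apply Rabs_le_between in Hx. pose proof PI2_1.
  destruct (cos_bound x 0 ltac:(lra) ltac:(lra)) as [Hlo Hhi].
  unfold cos_approx, cos_term in Hlo, Hhi. simpl in Hlo, Hhi.
  split; [eapply Rle_trans; [| exact Hlo] | eapply Rle_trans; [exact Hhi |]];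
    right; field.
Qed.

Lemma Rabs_exp_neg_sq_sub_cos (x : R) : Rabs x <= 1 -> Rabs (exp (- (x ^ 2 / 2)) - cos x) <= x ^ 4 / 4.
Proof.
  intro Hx.
  destruct (cos_between x Hx). destruct (exp_neg_between (x ^ 2 / 2)); [nra |].
  replace ((x ^ 2 / 2) ^ 2) with (x ^ 4 / 4) in * by field.
  pose proof (pow2_ge_0 (x ^ 2)). replace ((x ^ 2) ^ 2) with (x ^ 4) in * by ring.
  apply Rabs_le. lra.
Qed.

Lemma Cmod_le_Rabs_re_im (z : C) : Cmod z <= Rabs (fst z) + Rabs (snd z).
Proof.
  destruct z as [x y]. unfold Cmod; cbn [fst snd].
  pose proof (Rabs_pos x); pose proof (Rabs_pos y).
  rewrite <- (sqrt_pow2 (Rabs x + Rabs y)) by lra.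
  apply sqrt_le_1_alt.
  rewrite <- (pow2_abs x), <- (pow2_abs y). nra.
Qed.

Lemma ee_plus (u v : R) : ee (u + v) = (ee u * ee v)%C.
Proof.
  unfold ee. apply injective_projections; simpl; [rewrite cos_plus | rewrite sin_plus]; ring.
Qed.

Lemma ee_opp (u : R) : ee (- u) = (/ ee u)%C.
Proof.
  unfold ee, Cinv; cbn [fst snd]. rewrite cos_neg, sin_neg.
  pose proof (sin2_cos2 u) as H. unfold Rsqr in H.
  replace (cos u ^ 2 + sin u ^ 2) with 1 by (simpl; lra).
  apply injective_projections; cbn [fst snd]; field.
Qed.

Lemma Cmod_ee (u : R) : Cmod (ee u) = 1.
Proof.
  unfold Cmod, ee; cbn [fst snd]. rewrite <- sqrt_1. f_equal.
  pose proof (sin2_cos2 u) as H. unfold Rsqr in H. simpl. lra.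
Qed.

Lemma ee_zero_mul (th : R) : ee (0 * th) = 1%C.
Proof. rewrite Rmult_0_l. unfold ee. rewrite cos_0, sin_0. reflexivity. Qed.

Lemma ee_one_mul (th : R) : ee (1 * th) = ee th.
Proof. rewrite Rmult_1_l. reflexivity. Qed.

Lemma ee_opp_one_mul (th : R) : ee (- (1) * th) = (/ ee th)%C.
Proof. rewrite <- Ropp_mult_distr_l, Rmult_1_l. apply ee_opp. Qed.

(** * Gaussian characteristic functions of mixtures *)

Definition normal_cf (m v th : R) : C := (RtoC (exp (- / 2 * v * th ^ 2)) * ee (m * th))%C.

Lemma Cmod_normal_cf_le_1 (m v th : R) : 0 <= v -> Cmod (normal_cf m v th) <= 1.
Proof.
  intro Hv. unfold normal_cf.
  rewrite Cmod_mult, Cmod_ee, Cmod_R, Rmult_1_r, Rabs_right by (left; apply exp_pos).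
  assert (Hneg : - / 2 * v * th ^ 2 <= 0) by (pose proof (pow2_ge_0 th); nra).
  rewrite <- exp_0. destruct Hneg as [Hneg | ->]; [left; apply exp_increasing, Hneg | lra].
Qed.

Lemma normal_cf_split (M w d e th : R) :
  normal_cf (M + d) (w + e) th
  = (normal_cf M w th * (RtoC (exp (- (e * th ^ 2 / 2))) * ee (d * th)))%C.
Proof.
  unfold normal_cf. rewrite Rmult_plus_distr_r, ee_plus.
  replace (- / 2 * (w + e) * th ^ 2) with (- / 2 * w * th ^ 2 + - (e * th ^ 2 / 2)) by field.
  rewrite exp_plus, RtoC_mult. ring.
Qed.

Lemma ee_mul_normal_cf (c m v th : R) : (ee (c * th) * normal_cf m v th)%C = normal_cf (m + c) v th.
Proof. unfold normal_cf. rewrite Rmult_plus_distr_r, (Rplus_comm (m * th)), ee_plus. ring. Qed.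

Definition mixture_kernel (d e th : R) : C :=
  ((exp (- ((d * th) ^ 2 / 2)) - cos (d * th) * cosh (e * th ^ 2 / 2))%R,
   (sin (d * th) * sinh (e * th ^ 2 / 2))%R).

Lemma normal_cf_mixture_factor (M w d e th : R) :
  (normal_cf M (w + d ^ 2) th
   - / 2 * (normal_cf (M + d) (w + e) th + normal_cf (M - d) (w - e) th))%C
  = (normal_cf M w th * mixture_kernel d e th)%C.
Proof.
  assert (Hcentre : normal_cf M (w + d ^ 2) th
                    = (normal_cf M w th * RtoC (exp (- ((d * th) ^ 2 / 2))))%C).
  { unfold normal_cf.
    replace (- / 2 * (w + d ^ 2) * th ^ 2) with (- / 2 * w * th ^ 2 + - ((d * th) ^ 2 / 2)) by field.
    rewrite exp_plus, RtoC_mult. ring. }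
  replace (M - d) with (M + - d) by ring. replace (w - e) with (w + - e) by ring.
  rewrite Hcentre, !normal_cf_split.
  replace (- d * th) with (- (d * th)) by ring.
  replace (- (- e * th ^ 2 / 2)) with (e * th ^ 2 / 2) by field.
  destruct (normal_cf M w th) as [n1 n2].
  unfold mixture_kernel, ee, cosh, sinh. rewrite cos_neg, sin_neg.
  apply injective_projections; simpl; field.
Qed.

Lemma mixture_kernel_parts_bound (x y : R) : Rabs x <= 1 -> Rabs y <= 1 / 2 ->
  Rabs (exp (- (x ^ 2 / 2)) - cos x * cosh y) + Rabs (sin x * sinh y)
  <= x ^ 4 / 4 + 2 * y ^ 2 + 2 * Rabs x * Rabs y.
Proof.
  intros Hx Hy.
  pose proof (Rabs_exp_neg_sq_sub_cos x Hx) as Hcos.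
  destruct (cosh_sub_1_between y Hy) as [Hch0 Hch].
  pose proof (Rabs_sinh_le y Hy) as Hsh.
  pose proof (Rabs_sin_le x) as Hsin.
  assert (Hc : Rabs (cos x) <= 1) by apply Rabs_le, COS_bound.
  replace (exp (- (x ^ 2 / 2)) - cos x * cosh y)
    with ((exp (- (x ^ 2 / 2)) - cos x) - cos x * (cosh y - 1)) by ring.
  pose proof (Rabs_triang (exp (- (x ^ 2 / 2)) - cos x) (- (cos x * (cosh y - 1)))).
  rewrite Rabs_Ropp, !Rabs_mult, (Rabs_right (cosh y - 1)) in * by lra.
  pose proof (Rabs_pos (cos x)); pose proof (Rabs_pos (sin x)); pose proof (Rabs_pos (sinh y)).
  pose proof (Rabs_pos x); pose proof (Rabs_pos y).
  unfold Rminus in *. nra.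
Qed.

Lemma mixture_kernel_Cmod_bound (d e th : R) :
  Rabs d <= 3 / 2 -> Rabs e <= 1 -> Rabs th < 1 / 2 ->
  Cmod (mixture_kernel d e th) <= 16 * Rabs th ^ 3.
Proof.
  intros Hd He Hth. set (t := Rabs th) in *. assert (Ht : 0 <= t) by apply Rabs_pos.
  eapply Rle_trans; [apply Cmod_le_Rabs_re_im | unfold mixture_kernel; cbn [fst snd]].
  assert (Hx : Rabs (d * th) <= 3 / 2 * t).
  { rewrite Rabs_mult. apply Rmult_le_compat_r; [apply Rabs_pos | exact Hd]. }
  assert (Hy : Rabs (e * th ^ 2 / 2) <= t ^ 2 / 2).
  { rewrite Rabs_div, Rabs_mult, <- RPow_abs, (Rabs_right 2) by lra. fold t.
    apply Rmult_le_compat_r; [lra |].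
    replace (t ^ 2) with (1 * t ^ 2) at 2 by ring.
    apply Rmult_le_compat_r; [apply pow2_ge_0 | exact He]. }
  pose proof (mixture_kernel_parts_bound (d * th) (e * th ^ 2 / 2) ltac:(lra) ltac:(simpl in *; nra))
    as Hk.
  rewrite <- (pow2_abs (e * th ^ 2 / 2)) in Hk.
  replace ((d * th) ^ 4) with ((Rabs (d * th) ^ 2) ^ 2) in Hk by (rewrite pow2_abs; ring).
  set (X := Rabs (d * th)) in *. set (Y := Rabs (e * th ^ 2 / 2)) in *.
  assert (HX : 0 <= X) by apply Rabs_pos. assert (HY : 0 <= Y) by apply Rabs_pos.
  assert (X ^ 2 <= 9 / 4 * t ^ 2) by (simpl; nra).
  assert ((X ^ 2) ^ 2 <= 81 / 16 * t ^ 4) by (pose proof (pow2_ge_0 X); simpl in *; nra).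
  assert (Y ^ 2 <= t ^ 4 / 4) by (simpl in *; nra).
  assert (X * Y <= 3 / 4 * t ^ 3) by (simpl in *; nra).
  assert (0 <= t ^ 3) by (apply pow_le; lra).
  assert (t ^ 4 <= t ^ 3 / 2) by (replace (t ^ 4) with (t ^ 3 * t) by ring; nra).
  lra.
Qed.

Definition is_mixture (M V m1 v1 m2 v2 : R) : Prop :=
  M = (m1 + m2) / 2 /\ V = (v1 + v2) / 2 + ((m1 - m2) / 2) ^ 2.

Lemma Cmod_sub_half_sum_le (z a b : C) :
  Cmod z <= 1 -> Cmod a <= 1 -> Cmod b <= 1 -> Cmod (z - / 2 * (a + b))%C <= 2.
Proof.
  intros Hz Ha Hb.
  eapply Rle_trans; [apply Cmod_triangle |].
  rewrite Cmod_opp, Cmod_mult, Cmod_inv, Cmod_R, Rabs_right by (try (injection; lra); lra).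
  pose proof (Cmod_triangle a b). lra.
Qed.

Lemma normal_cf_mixture_bound (M V m1 v1 m2 v2 th : R) :
  is_mixture M V m1 v1 m2 v2 -> 0 <= v1 -> 0 <= v2 ->
  Rabs (m1 - m2) <= 3 -> Rabs (v1 - v2) <= 2 ->
  Cmod (normal_cf M V th - / 2 * (normal_cf m1 v1 th + normal_cf m2 v2 th))%C <= 16 * Rabs th ^ 3.
Proof.
  intros [-> ->] Hv1 Hv2 Hm Hv.
  destruct (Rle_lt_dec (1 / 2) (Rabs th)) as [Hbig | Hsmall].
  - eapply Rle_trans; [apply Cmod_sub_half_sum_le; apply Cmod_normal_cf_le_1; try assumption |].
    + pose proof (pow2_ge_0 ((m1 - m2) / 2)). lra.
    + assert (1 / 8 <= Rabs th ^ 3) by (simpl; pose proof (Rabs_pos th); nra). lra.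
  - set (d := (m1 - m2) / 2). set (e := (v1 - v2) / 2). set (w := (v1 + v2) / 2).
    pose proof (normal_cf_mixture_factor ((m1 + m2) / 2) w d e th) as Hfactor.
    replace ((m1 + m2) / 2 + d) with m1 in Hfactor by (unfold d; field).
    replace ((m1 + m2) / 2 - d) with m2 in Hfactor by (unfold d; field).
    replace (w + e) with v1 in Hfactor by (unfold w, e; field).
    replace (w - e) with v2 in Hfactor by (unfold w, e; field).
    rewrite Hfactor, Cmod_mult.
    pose proof (Cmod_normal_cf_le_1 ((m1 + m2) / 2) w th ltac:(unfold w; lra)).
    assert (Hd : Rabs d <= 3 / 2) by (unfold d; rewrite Rabs_div, (Rabs_right 2); lra).
    assert (He : Rabs e <= 1) by (unfold e; rewrite Rabs_div, (Rabs_right 2); lra).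
    pose proof (mixture_kernel_Cmod_bound d e th Hd He Hsmall).
    eapply Rle_trans; [apply Rmult_le_compat_r; [apply Cmod_ge_0 | eassumption] |]. lra.
Qed.

(** * Binary digit recursions *)

Lemma mod2_double_add (m s : nat) : ((2 * m + s) mod 2 = s mod 2)%nat.
Proof. rewrite Nat.add_comm, Nat.mul_comm. apply Nat.Div0.mod_add. Qed.

Lemma mod2_le_1 (s : nat) : (s mod 2 <= 1)%nat.
Proof. pose proof (Nat.mod_upper_bound s 2). lia. Qed.

Lemma mod2_succ (s : nat) : ((s + 1) mod 2 = 1 - s mod 2)%nat.
Proof.
  rewrite (Nat.div_mod_eq s 2) at 1. rewrite <- Nat.add_assoc, mod2_double_add.
  pose proof (mod2_le_1 s). destruct (s mod 2) as [| [|]]; [reflexivity | reflexivity | lia].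
Qed.

Lemma mod2_double (m : nat) : ((2 * m) mod 2 = 0)%nat.
Proof. rewrite <- (Nat.add_0_r (2 * m)). apply mod2_double_add. Qed.

Lemma mod2_double_succ (m : nat) : ((2 * m + 1) mod 2 = 1)%nat.
Proof. apply mod2_double_add. Qed.

Lemma mod2_double_succ_add (m s : nat) : ((2 * m + 1 + s) mod 2 = 1 - s mod 2)%nat.
Proof. rewrite <- Nat.add_assoc, mod2_double_add, Nat.add_comm. apply mod2_succ. Qed.

Lemma r_double (n : nat) : r (2 * n) = r n.
Proof.
  unfold r, bits. rewrite Nat2N.inj_mul.
  destruct (N.of_nat n); [reflexivity |]. simpl. destruct (pbits p); reflexivity.
Qed.

Lemma r_double_succ (n : nat) : r (2 * n + 1) = (r n + n mod 2)%nat.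
Proof.
  unfold r, bits. rewrite Nat2N.inj_add, Nat2N.inj_mul.
  destruct (N.of_nat n) as [| p] eqn:Hn; [replace n with 0%nat by lia; reflexivity |].
  change (count11 (true :: pbits p) = (count11 (pbits p) + n mod 2)%nat).
  destruct p as [q | q |]; [| | replace n with 1%nat by lia; reflexivity].
  - change (1 + count11 (true :: pbits q) = count11 (true :: pbits q) + n mod 2)%nat.
    replace n with (2 * Pos.to_nat q + 1)%nat by lia.
    rewrite mod2_double_add. change (1 mod 2)%nat with 1%nat. lia.
  - change (count11 (false :: pbits q) = count11 (false :: pbits q) + n mod 2)%nat.
    replace n with (2 * Pos.to_nat q + 0)%nat by lia.
    rewrite mod2_double_add. change (0 mod 2)%nat with 0%nat. lia.
Qed.

Lemma d_zero (n : nat) : d 0 n = 0%Z.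
Proof. unfold d. rewrite Nat.add_0_r. lia. Qed.

Lemma d_double_double (s n : nat) : d (2 * s) (2 * n) = d s n.
Proof.
  unfold d. replace (2 * n + 2 * s)%nat with (2 * (n + s))%nat by lia.
  rewrite !r_double. reflexivity.
Qed.

Lemma d_double_succ (s n : nat) :
  d (2 * s) (2 * n + 1) = (d s n + Z.of_nat ((n + s) mod 2) - Z.of_nat (n mod 2))%Z.
Proof.
  unfold d. replace (2 * n + 1 + 2 * s)%nat with (2 * (n + s) + 1)%nat by lia.
  rewrite !r_double_succ. lia.
Qed.

Lemma d_succ_double (s n : nat) : d (2 * s + 1) (2 * n) = (d s n + Z.of_nat ((n + s) mod 2))%Z.
Proof.
  unfold d. replace (2 * n + (2 * s + 1))%nat with (2 * (n + s) + 1)%nat by lia.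
  rewrite r_double_succ, r_double. lia.
Qed.

Lemma d_succ_succ (s n : nat) : d (2 * s + 1) (2 * n + 1) = (d (s + 1) n - Z.of_nat (n mod 2))%Z.
Proof.
  unfold d. replace (2 * n + 1 + (2 * s + 1))%nat with (2 * (n + (s + 1)))%nat by lia.
  rewrite r_double, r_double_succ. lia.
Qed.

Definition parity (s : nat) : Z := Z.of_nat (s mod 2).

Lemma parity_double (s : nat) : parity (2 * s) = 0%Z.
Proof. unfold parity. rewrite mod2_double. reflexivity. Qed.

Lemma parity_double_succ (s : nat) : parity (2 * s + 1) = 1%Z.
Proof. unfold parity. rewrite mod2_double_succ. reflexivity. Qed.

Lemma parity_cases (s : nat) :
  IZR (parity s) = 0 /\ IZR (parity (s + 1)) = 1 \/ IZR (parity s) = 1 /\ IZR (parity (s + 1)) = 0.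
Proof.
  destruct (Nat.Even_or_Odd s) as [[u ->] | [u ->]]; [left | right].
  - rewrite parity_double, parity_double_succ. split; reflexivity.
  - replace (2 * u + 1 + 1)%nat with (2 * (u + 1))%nat by lia.
    rewrite parity_double, parity_double_succ. split; reflexivity.
Qed.

Definition alpha_event (t : nat) (k : Z) (n : nat) : bool := Z.eqb (d t (2 * n)) k.

Definition beta_event (t : nat) (k : Z) (n : nat) : bool := Z.eqb (d t (2 * n + 1)) k.

Lemma Z_eqb_translate (x y k l : Z) : (x - k = y - l)%Z -> Z.eqb x k = Z.eqb y l.
Proof. intro H. destruct (Z.eqb_spec x k), (Z.eqb_spec y l); auto; lia. Qed.

Lemma alpha_event_zero (k : Z) (m : nat) : alpha_event 0 k m = Z.eqb 0 k.
Proof. unfold alpha_event. rewrite d_zero. reflexivity. Qed.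

Lemma beta_event_zero (k : Z) (m : nat) : beta_event 0 k m = Z.eqb 0 k.
Proof. unfold beta_event. rewrite d_zero. reflexivity. Qed.

Lemma alpha_event_double (s : nat) (k : Z) (m : nat) :
  alpha_event (2 * s) k (2 * m) = alpha_event s k m /\
  alpha_event (2 * s) k (2 * m + 1) = beta_event s k m.
Proof. unfold alpha_event, beta_event. rewrite !d_double_double. auto. Qed.

Lemma beta_event_double (s : nat) (k : Z) (m : nat) :
  beta_event (2 * s) k (2 * m) = alpha_event s (k - parity s) m /\
  beta_event (2 * s) k (2 * m + 1) = beta_event s (k + parity s) m.
Proof.
  unfold alpha_event, beta_event, parity. rewrite !d_double_succ.
  rewrite mod2_double_add, mod2_double_succ_add, mod2_double, mod2_double_succ.
  pose proof (mod2_le_1 s). split; apply Z_eqb_translate; lia.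
Qed.

Lemma alpha_event_double_succ (s : nat) (k : Z) (m : nat) :
  alpha_event (2 * s + 1) k (2 * m) = alpha_event s (k - parity s) m /\
  alpha_event (2 * s + 1) k (2 * m + 1) = beta_event s (k - (1 - parity s)) m.
Proof.
  unfold alpha_event, beta_event, parity. rewrite !d_succ_double.
  rewrite mod2_double_add, mod2_double_succ_add.
  pose proof (mod2_le_1 s). split; apply Z_eqb_translate; lia.
Qed.

Lemma beta_event_double_succ (s : nat) (k : Z) (m : nat) :
  beta_event (2 * s + 1) k (2 * m) = alpha_event (s + 1) k m /\
  beta_event (2 * s + 1) k (2 * m + 1) = beta_event (s + 1) (k + 1) m.
Proof.
  unfold alpha_event, beta_event. rewrite !d_succ_succ, mod2_double, mod2_double_succ.
  split; apply Z_eqb_translate; lia.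
Qed.

(** * Asymptotic densities *)

Definition count (P : nat -> bool) (N : nat) : nat := length (filter P (seq 0 N)).

Definition has_density (P : nat -> bool) (x : R) : Prop :=
  is_lim_seq (fun N => INR (count P N) / INR N) x.

Lemma density_eq (P : nat -> bool) (x : R) : has_density P x -> density P = x.
Proof.
  unfold has_density, density, count. intro H. rewrite (is_lim_seq_unique _ _ H). reflexivity.
Qed.

Lemma has_density_density (P : nat -> bool) (x : R) : has_density P x -> has_density P (density P).
Proof. intro H. rewrite (density_eq P x H). exact H. Qed.

Lemma has_density_ext (P Q : nat -> bool) (x : R) :
  (forall n, P n = Q n) -> has_density P x -> has_density Q x.
Proof.
  intros H. unfold has_density, count. apply is_lim_seq_ext. intro N. do 3 f_equal.
  apply filter_ext. exact H.
Qed.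

Lemma count_succ (P : nat -> bool) (N : nat) : count P (S N) = (count P N + if P N then 1 else 0)%nat.
Proof. unfold count. rewrite seq_S, filter_app, length_app. simpl. destruct (P N); reflexivity. Qed.

Lemma count_le (P : nat -> bool) (N : nat) : (count P N <= N)%nat.
Proof. induction N; [apply Nat.le_0_l |]. rewrite count_succ. destruct (P N); lia. Qed.

Definition indicator (b : bool) : R := if b then 1 else 0.

Lemma count_const (b : bool) (N : nat) : INR (count (fun _ => b) N) = indicator b * INR N.
Proof.
  induction N as [| N IH]; [simpl; ring |].
  rewrite count_succ, plus_INR, IH, S_INR. unfold indicator. destruct b; simpl; ring.
Qed.

Lemma count_interleave (P Pe Po : nat -> bool) (N : nat) :
  (forall m, P (2 * m)%nat = Pe m) -> (forall m, P (2 * m + 1)%nat = Po m) ->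
  count P N = (count Pe (N - Nat.div2 N) + count Po (Nat.div2 N))%nat.
Proof.
  intros He Ho.
  assert (Hdouble : forall h, count P (2 * h) = (count Pe h + count Po h)%nat).
  { induction h as [| h IH]; [reflexivity |].
    replace (2 * S h)%nat with (S (S (2 * h))) by lia.
    rewrite !count_succ, IH, He. replace (S (2 * h)) with (2 * h + 1)%nat by lia.
    rewrite Ho. lia. }
  destruct (Nat.Even_or_Odd N) as [[h ->] | [h ->]].
  - rewrite Nat.div2_double, Hdouble. f_equal. f_equal. lia.
  - rewrite Nat.add_1_r, Nat.div2_succ_double, count_succ, Hdouble, He.
    replace (S (2 * h) - h)%nat with (S h) by lia. rewrite count_succ. lia.
Qed.

Lemma div2_between (N : nat) : (2 * Nat.div2 N <= N <= 2 * Nat.div2 N + 1)%nat.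
Proof. pose proof (Nat.div2_odd N) as H. destruct (Nat.odd N); simpl in H; lia. Qed.

Lemma sub_div2_cases (N : nat) : (N - Nat.div2 N = Nat.div2 N \/ N - Nat.div2 N = S (Nat.div2 N))%nat.
Proof. pose proof (div2_between N). lia. Qed.

Lemma div2_to_infinity : filterlim Nat.div2 eventually eventually.
Proof.
  intros Q [M HM]. exists (2 * M + 2)%nat. intros N HN. apply HM.
  pose proof (div2_between N). lia.
Qed.

Lemma sub_div2_to_infinity : filterlim (fun N => N - Nat.div2 N)%nat eventually eventually.
Proof.
  intros Q [M HM]. exists (2 * M)%nat. intros N HN. apply HM.
  pose proof (div2_between N). lia.
Qed.

Lemma is_lim_seq_inv_INR_S : is_lim_seq (fun n => / INR (S n)) 0.
Proof.
  replace (Finite 0) with (Rbar_inv p_infty) by reflexivity.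
  apply is_lim_seq_inv; [| discriminate].
  apply (is_lim_seq_incr_1 INR), is_lim_seq_INR.
Qed.

Lemma is_lim_seq_div2_ratio : is_lim_seq (fun N => INR (Nat.div2 N) / INR N) (1 / 2).
Proof.
  apply is_lim_seq_incr_1.
  apply is_lim_seq_le_le with (fun n => 1 / 2 - / INR (S n)) (fun _ => 1 / 2).
  - intro n. pose proof (div2_between (S n)) as [Hlo Hhi].
    pose proof (lt_0_INR (S n) (Nat.lt_0_succ n)).
    set (h := Nat.div2 (S n)) in *. set (a := S n) in *.
    apply le_INR in Hlo, Hhi. rewrite ?plus_INR, ?mult_INR in *. change (INR 2) with 2 in *.
    change (INR 1) with 1 in *.
    split.
    + replace (1 / 2 - / INR a) with ((INR a / 2 - 1) / INR a) by (field; lra).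
      apply Rmult_le_compat_r; [left; apply Rinv_0_lt_compat |]; lra.
    + replace (1 / 2) with ((INR a / 2) / INR a) by (field; lra).
      apply Rmult_le_compat_r; [left; apply Rinv_0_lt_compat |]; lra.
  - pose proof (is_lim_seq_minus' _ _ _ _ (is_lim_seq_const (1 / 2)) is_lim_seq_inv_INR_S) as H.
    rewrite Rminus_0_r in H. exact H.
  - apply is_lim_seq_const.
Qed.

Lemma is_lim_seq_sub_div2_ratio : is_lim_seq (fun N => INR (N - Nat.div2 N) / INR N) (1 / 2).
Proof.
  apply is_lim_seq_ext_loc with (fun N => 1 - INR (Nat.div2 N) / INR N).
  - exists 1%nat. intros N HN. rewrite minus_INR by apply Nat.le_div2_diag_l.
    field. apply not_0_INR. lia.
  - pose proof (is_lim_seq_minus' _ _ _ _ (is_lim_seq_const 1) is_lim_seq_div2_ratio) as H.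
    replace (1 - 1 / 2) with (1 / 2) in H by field. exact H.
Qed.

Lemma has_density_interleave (P Pe Po : nat -> bool) (x y : R) :
  (forall m, P (2 * m)%nat = Pe m) -> (forall m, P (2 * m + 1)%nat = Po m) ->
  has_density Pe x -> has_density Po y -> has_density P ((x + y) / 2).
Proof.
  unfold has_density. intros He Ho Hx Hy.
  apply is_lim_seq_ext_loc with
    (fun N => INR (count Pe (N - Nat.div2 N)) / INR (N - Nat.div2 N) * (INR (N - Nat.div2 N) / INR N)
            + INR (count Po (Nat.div2 N)) / INR (Nat.div2 N) * (INR (Nat.div2 N) / INR N)).
  - exists 2%nat. intros N HN. pose proof (div2_between N).
    rewrite (count_interleave P Pe Po N He Ho), plus_INR.
    field. repeat split; apply not_0_INR; lia.
  - replace ((x + y) / 2) with (x * (1 / 2) + y * (1 / 2)) by field.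
    apply is_lim_seq_plus'; apply is_lim_seq_mult';
      auto using is_lim_seq_sub_div2_ratio, is_lim_seq_div2_ratio.
    + exact (is_lim_seq_subseq (fun M => INR (count Pe M) / INR M) x _ sub_div2_to_infinity Hx).
    + exact (is_lim_seq_subseq (fun M => INR (count Po M) / INR M) y _ div2_to_infinity Hy).
Qed.

Lemma has_density_of_count_error (P : nat -> bool) (x : R) :
  (forall j, exists C, forall N, Rabs (INR (count P N) - x * INR N) <= C + INR N * (1 / 2) ^ j) ->
  has_density P x.
Proof.
  intro Herr. apply is_lim_seq_Reals. intros eps Heps.
  destruct (pow_lt_1_zero (1 / 2) ltac:(rewrite Rabs_right; lra) (eps / 2) ltac:(lra)) as [j Hj].
  specialize (Hj j (Nat.le_refl j)). rewrite Rabs_right in Hj by (apply Rle_ge, pow_le; lra).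
  destruct (Herr j) as [C HC].
  destruct (INR_unbounded (2 * Rabs C / eps)) as [N0 HN0].
  exists (S N0). intros N HN. unfold R_dist.
  assert (HN0N : INR N0 < INR N) by (apply lt_INR; lia).
  assert (HNpos : 0 < INR N) by (pose proof (pos_INR N0); lra).
  replace (INR (count P N) / INR N - x) with ((INR (count P N) - x * INR N) / INR N) by (field; lra).
  rewrite Rabs_div, (Rabs_right (INR N)) by lra.
  apply Rle_lt_trans with ((Rabs C + INR N * (1 / 2) ^ j) / INR N).
  { apply Rmult_le_compat_r; [left; apply Rinv_0_lt_compat; lra |].
    specialize (HC N). pose proof (Rle_abs C). lra. }
  replace ((Rabs C + INR N * (1 / 2) ^ j) / INR N) with (Rabs C / INR N + (1 / 2) ^ j) by (field; lra).
  assert (Rabs C / INR N < eps / 2).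
  { apply Rmult_lt_reg_r with (INR N); [lra |].
    unfold Rdiv at 1. rewrite Rmult_assoc, Rinv_l by lra.
    apply Rmult_lt_reg_r with (2 / eps); [apply Rdiv_lt_0_compat; lra |].
    replace (eps / 2 * INR N * (2 / eps)) with (INR N) by (field; lra). lra. }
  lra.
Qed.

Lemma has_density_const (b : bool) : has_density (fun _ => b) (indicator b).
Proof.
  apply has_density_of_count_error. intro j. exists 0. intro N.
  rewrite count_const, Rminus_diag, Rabs_R0.
  pose proof (pos_INR N). assert (0 <= (1 / 2) ^ j) by (apply pow_le; lra). nra.
Qed.

Lemma count_alternating_error (P : nat -> bool) (b0 b1 : bool) (N : nat) :
  (forall m, P (2 * m)%nat = b0) -> (forall m, P (2 * m + 1)%nat = b1) ->
  Rabs (INR (count P N) - (indicator b0 + indicator b1) / 2 * INR N) <= 1 / 2.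
Proof.
  intros He Ho.
  rewrite (count_interleave P (fun _ => b0) (fun _ => b1) N He Ho), plus_INR, !count_const.
  replace (INR N) with (INR (N - Nat.div2 N) + INR (Nat.div2 N))
    by (rewrite <- plus_INR; f_equal; pose proof (div2_between N); lia).
  apply Rabs_le. unfold indicator.
  destruct b0, b1, (sub_div2_cases N) as [-> | ->]; rewrite ?S_INR; lra.
Qed.

(** * The densities a_t and b_t *)

Definition delta0 (k : Z) : R := indicator (Z.eqb 0 k).

Lemma count_alpha_event_one_error (k : Z) (N : nat) :
  Rabs (INR (count (alpha_event 1 k) N) - (delta0 k + delta0 (k - 1)) / 2 * INR N) <= 1 / 2.
Proof.
  apply count_alternating_error; intro m;
    destruct (alpha_event_double_succ 0 k m) as [Heven Hodd];
    change (2 * 0 + 1)%nat with 1%nat in Heven, Hodd; change (parity 0) with 0%Z in Heven, Hodd.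
  - now rewrite Heven, alpha_event_zero, Z.sub_0_r.
  - now rewrite Hodd, beta_event_zero.
Qed.

(* At s = 0 the rule for b_{2s+1} reads b_1(k) = (a_1(k) + b_1(k+1)) / 2, which refers to b_1
   itself; [beta1] is its summable solution, and its density is obtained by unrolling the rule. *)
Definition beta1 (k : Z) : R :=
  if (2 <=? k)%Z then 0 else if (k =? 1)%Z then 1 / 4 else 3 / 2 ^ Z.to_nat (3 - k).

Lemma beta1_rec (k : Z) : beta1 k = ((delta0 k + delta0 (k - 1)) / 2 + beta1 (k + 1)) / 2.
Proof.
  unfold beta1, delta0, indicator.
  destruct (Z.ltb_spec k 0) as [Hk | Hk].
  - replace (Z.to_nat (3 - k)) with (S (Z.to_nat (3 - (k + 1)))) by lia.
    destruct (Z.leb_spec 2 k), (Z.eqb_spec k 1), (Z.leb_spec 2 (k + 1)), (Z.eqb_spec (k + 1) 1),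
      (Z.eqb_spec 0 k), (Z.eqb_spec 0 (k - 1)); try lia.
    simpl pow. field. apply pow_nonzero. lra.
  - destruct (Z.eqb_spec k 0) as [-> | Hk0]; [simpl; field |].
    destruct (Z.eqb_spec k 1) as [-> | Hk1]; [simpl; field |].
    destruct (Z.leb_spec 2 k), (Z.leb_spec 2 (k + 1)), (Z.eqb_spec 0 k), (Z.eqb_spec 0 (k - 1));
      try lia.
    field.
Qed.

Lemma beta1_between (k : Z) : 0 <= beta1 k <= 1.
Proof.
  unfold beta1.
  destruct (Z.leb_spec 2 k); [lra |]. destruct (Z.eqb_spec k 1) as [| Hk1]; [lra |].
  replace (Z.to_nat (3 - k)) with (S (S (Z.to_nat (1 - k)))) by lia.
  set (n := Z.to_nat (1 - k)). pose proof (pow_R1_Rle 2 n ltac:(lra)).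
  change (2 ^ S (S n)) with (2 * (2 * 2 ^ n)).
  split; [apply Rdiv_le_0_compat; lra |].
  apply Rmult_le_reg_r with (2 * (2 * 2 ^ n)); [lra |].
  unfold Rdiv. rewrite Rmult_assoc, Rinv_l by lra. lra.
Qed.

Lemma count_beta_event_one_error (j : nat) : forall (k : Z) (N : nat),
  Rabs (INR (count (beta_event 1 k) N) - beta1 k * INR N) <= 2 * INR j + 2 * INR N * (1 / 2) ^ j.
Proof.
  induction j as [| j IH]; intros k N.
  - pose proof (le_INR _ _ (count_le (beta_event 1 k) N)).
    pose proof (pos_INR (count (beta_event 1 k) N)).
    pose proof (beta1_between k). pose proof (pos_INR N).
    assert (0 <= beta1 k * INR N <= INR N) by nra.
    apply Rabs_le. simpl INR. lra.
  - set (h := Nat.div2 N).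
    assert (Hsplit : count (beta_event 1 k) N
                     = (count (alpha_event 1 k) (N - h) + count (beta_event 1 (k + 1)) h)%nat).
    { apply count_interleave; intro m; destruct (beta_event_double_succ 0 k m) as [Heven Hodd];
        change (2 * 0 + 1)%nat with 1%nat in Heven, Hodd; assumption. }
    pose proof (count_alpha_event_one_error k (N - h)) as Ha.
    pose proof (IH (k + 1)%Z h) as Hb.
    assert (HN : INR N = INR (N - h) + INR h)
      by (rewrite <- plus_INR; f_equal; pose proof (div2_between N); unfold h; lia).
    rewrite Hsplit, plus_INR, beta1_rec, HN.
    set (a := (delta0 k + delta0 (k - 1)) / 2) in *.
    assert (0 <= a <= 1 / 2)
      by (unfold a, delta0, indicator; destruct (Z.eqb_spec 0 k), (Z.eqb_spec 0 (k - 1)); lia || lra).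
    pose proof (beta1_between (k + 1)).
    rewrite S_INR, <- tech_pow_Rmult.
    assert (0 <= (1 / 2) ^ j) by (apply pow_le; lra).
    pose proof (pos_INR h).
    apply Rabs_le_between in Ha, Hb. apply Rabs_le.
    destruct (sub_div2_cases N) as [Hd | Hd]; fold h in Hd; rewrite Hd, ?S_INR in *; nra.
Qed.

Lemma has_density_beta_event_one (k : Z) : has_density (beta_event 1 k) (beta1 k).
Proof.
  apply has_density_of_count_error. intro j. exists (2 * INR (S j)). intro N.
  pose proof (count_beta_event_one_error (S j) k N) as H.
  replace (2 * INR N * (1 / 2) ^ S j) with (INR N * (1 / 2) ^ j) in H by (simpl; field).
  exact H.
Qed.

Lemma has_density_alpha_zero (k : Z) : has_density (alpha_event 0 k) (delta0 k).
Proof.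
  apply (has_density_ext (fun _ => Z.eqb 0 k)); [intro; symmetry; apply alpha_event_zero |].
  apply has_density_const.
Qed.

Lemma has_density_beta_zero (k : Z) : has_density (beta_event 0 k) (delta0 k).
Proof.
  apply (has_density_ext (fun _ => Z.eqb 0 k)); [intro; symmetry; apply beta_event_zero |].
  apply has_density_const.
Qed.

Lemma has_density_alpha_double (s : nat) (k : Z) (x y : R) :
  has_density (alpha_event s k) x -> has_density (beta_event s k) y ->
  has_density (alpha_event (2 * s) k) ((x + y) / 2).
Proof. apply has_density_interleave; intro m; apply (alpha_event_double s k m). Qed.

Lemma has_density_beta_double (s : nat) (k : Z) (x y : R) :
  has_density (alpha_event s (k - parity s)) x -> has_density (beta_event s (k + parity s)) y ->
  has_density (beta_event (2 * s) k) ((x + y) / 2).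
Proof. apply has_density_interleave; intro m; apply (beta_event_double s k m). Qed.

Lemma has_density_alpha_double_succ (s : nat) (k : Z) (x y : R) :
  has_density (alpha_event s (k - parity s)) x -> has_density (beta_event s (k - (1 - parity s))) y ->
  has_density (alpha_event (2 * s + 1) k) ((x + y) / 2).
Proof. apply has_density_interleave; intro m; apply (alpha_event_double_succ s k m). Qed.

Lemma has_density_beta_double_succ (s : nat) (k : Z) (x y : R) :
  has_density (alpha_event (s + 1) k) x -> has_density (beta_event (s + 1) (k + 1)) y ->
  has_density (beta_event (2 * s + 1) k) ((x + y) / 2).
Proof. apply has_density_interleave; intro m; apply (beta_event_double_succ s k m). Qed.

Lemma densities_exist (t : nat) :
  (forall k, has_density (alpha_event t k) (a_dens t k)) /\
  (forall k, has_density (beta_event t k) (b_dens t k)).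
Proof.
  induction t as [t IH] using (well_founded_induction lt_wf).
  unfold a_dens, b_dens. fold (alpha_event t) (beta_event t).
  destruct (Nat.Even_or_Odd t) as [[s ->] | [s ->]].
  - destruct (Nat.eq_dec s 0) as [-> | Hs].
    + split; intro k; eapply has_density_density;
        [apply has_density_alpha_zero | apply has_density_beta_zero].
    + destruct (IH s ltac:(lia)) as [Ha Hb].
      split; intro k; eapply has_density_density;
        [apply has_density_alpha_double | apply has_density_beta_double]; auto.
  - destruct (IH s ltac:(lia)) as [Ha Hb].
    split; intro k; [eapply has_density_density, has_density_alpha_double_succ; auto |].
    destruct (Nat.eq_dec s 0) as [-> | Hs]; [eapply has_density_density, has_density_beta_event_one |].
    destruct (IH (s + 1)%nat ltac:(lia)) as [Ha' Hb'].
    eapply has_density_density, has_density_beta_double_succ; auto.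
Qed.

Lemma a_dens_zero (k : Z) : a_dens 0 k = delta0 k.
Proof. apply density_eq, has_density_alpha_zero. Qed.

Lemma b_dens_zero (k : Z) : b_dens 0 k = delta0 k.
Proof. apply density_eq, has_density_beta_zero. Qed.

Lemma b_dens_one (k : Z) : b_dens 1 k = beta1 k.
Proof. apply density_eq, has_density_beta_event_one. Qed.

Lemma a_dens_double (s : nat) (k : Z) : a_dens (2 * s) k = (a_dens s k + b_dens s k) / 2.
Proof. destruct (densities_exist s). apply density_eq, has_density_alpha_double; auto. Qed.

Lemma b_dens_double (s : nat) (k : Z) :
  b_dens (2 * s) k = (a_dens s (k - parity s) + b_dens s (k + parity s)) / 2.
Proof. destruct (densities_exist s). apply density_eq, has_density_beta_double; auto. Qed.

Lemma a_dens_double_succ (s : nat) (k : Z) :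
  a_dens (2 * s + 1) k = (a_dens s (k - parity s) + b_dens s (k - (1 - parity s))) / 2.
Proof. destruct (densities_exist s). apply density_eq, has_density_alpha_double_succ; auto. Qed.

Lemma b_dens_double_succ (s : nat) (k : Z) :
  b_dens (2 * s + 1) k = (a_dens (s + 1) k + b_dens (s + 1) (k + 1)) / 2.
Proof. destruct (densities_exist (s + 1)). apply density_eq, has_density_beta_double_succ; auto. Qed.

(** * Laws on the integers *)

Lemma is_series_zero : is_series (fun _ : nat => 0) 0.
Proof.
  pose proof (is_series_scal_r 0 _ _ (is_series_geom (1 / 2) ltac:(rewrite Rabs_right; lra))) as H.
  rewrite Rmult_0_r in H. eapply is_series_ext; [| exact H]. intro n. simpl. ring.
Qed.

Lemma is_series_eq_zero (a : nat -> R) : (forall n, a n = 0) -> is_series a 0.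
Proof. intro H. eapply is_series_ext; [| exact is_series_zero]. intro. symmetry. apply H. Qed.

Lemma ex_series_eventually_zero (a : nat -> R) (N0 : nat) :
  (forall n, (N0 <= n)%nat -> a n = 0) -> ex_series a.
Proof.
  intro H. apply (ex_series_incr_n a N0). exists 0.
  apply is_series_eq_zero. intro n. apply H. lia.
Qed.

Lemma Series_nonneg (a : nat -> R) : ex_series a -> (forall n, 0 <= a n) -> 0 <= Series a.
Proof.
  intros Ha Hpos. rewrite <- (is_series_unique _ _ is_series_zero).
  apply Series_le; [intro n; split; [lra | apply Hpos] | exact Ha].
Qed.

Definition zsummable (f : Z -> R) : Prop :=
  ex_series (fun j => f (Z.of_nat j)) /\ ex_series (fun j => f (- Z.of_nat (S j))%Z).

Lemma zsummable_ext (f g : Z -> R) : (forall k, f k = g k) -> zsummable f -> zsummable g.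
Proof.
  intros H [H1 H2].
  split; [eapply ex_series_ext; [| exact H1] | eapply ex_series_ext; [| exact H2]]; intro; apply H.
Qed.

Lemma zsum_ext (f g : Z -> R) : (forall k, f k = g k) -> zsum f = zsum g.
Proof. intro H. unfold zsum. f_equal; apply Series_ext; intro; apply H. Qed.

Lemma zsummable_plus (f g : Z -> R) : zsummable f -> zsummable g -> zsummable (fun k => f k + g k).
Proof. intros [H1 H2] [H3 H4]. split; apply (ex_series_plus (V := R_NormedModule)); assumption. Qed.

Lemma zsum_plus (f g : Z -> R) :
  zsummable f -> zsummable g -> zsum (fun k => f k + g k) = zsum f + zsum g.
Proof. intros [H1 H2] [H3 H4]. unfold zsum. rewrite !Series_plus by assumption. ring. Qed.

Lemma zsummable_scal (c : R) (f : Z -> R) : zsummable f -> zsummable (fun k => c * f k).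
Proof. intros [H1 H2]. split; apply (ex_series_scal_l (V := R_NormedModule)); assumption. Qed.

Lemma zsum_scal (c : R) (f : Z -> R) : zsum (fun k => c * f k) = c * zsum f.
Proof. unfold zsum. rewrite !Series_scal_l. ring. Qed.

Lemma zsummable_zero (f : Z -> R) : (forall k, f k = 0) -> zsummable f /\ zsum f = 0.
Proof.
  intro H. split; [split; eexists; apply is_series_eq_zero; intro; apply H |].
  unfold zsum. rewrite !(is_series_unique _ 0) by (apply is_series_eq_zero; intro; apply H). ring.
Qed.

Lemma zsummable_shift_1 (f : Z -> R) :
  zsummable f -> zsummable (fun k => f (k - 1)%Z) /\ zsum (fun k => f (k - 1)%Z) = zsum f.
Proof.
  intros [Hp Hn].
  assert (Ep : ex_series (fun j => f (Z.of_nat j - 1)%Z)).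
  { apply ex_series_incr_1. eapply ex_series_ext; [| exact Hp]. intro n. cbv beta. f_equal. lia. }
  assert (En : ex_series (fun j => f (- Z.of_nat (S j) - 1)%Z)).
  { apply ex_series_incr_1 in Hn. eapply ex_series_ext; [| exact Hn]. intro n. cbv beta. f_equal. lia. }
  split; [split; assumption |]. unfold zsum.
  rewrite (Series_incr_1 _ Ep), (Series_incr_1 _ Hn).
  rewrite (Series_ext (fun k => f (Z.of_nat (S k) - 1)%Z) (fun j => f (Z.of_nat j)))
    by (intro; f_equal; lia).
  rewrite (Series_ext (fun j => f (- Z.of_nat (S j) - 1)%Z) (fun k => f (- Z.of_nat (S (S k)))%Z))
    by (intro; f_equal; lia).
  replace (Z.of_nat 0 - 1)%Z with (- Z.of_nat 1)%Z by reflexivity. ring.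
Qed.

Lemma zsummable_shift_opp_1 (f : Z -> R) :
  zsummable f -> zsummable (fun k => f (k + 1)%Z) /\ zsum (fun k => f (k + 1)%Z) = zsum f.
Proof.
  intro Hf.
  assert (Hg : zsummable (fun k => f (k + 1)%Z)).
  { destruct Hf as [Hp Hn]. split.
    - apply ex_series_incr_1 in Hp. eapply ex_series_ext; [| exact Hp]. intro n. cbv beta. f_equal. lia.
    - apply ex_series_incr_1. eapply ex_series_ext; [| exact Hn]. intro n. cbv beta. f_equal. lia. }
  split; [exact Hg |].
  destruct (zsummable_shift_1 _ Hg) as [_ Hsum]. rewrite <- Hsum.
  apply zsum_ext. intro k. f_equal. lia.
Qed.

Lemma zsummable_shift (c : Z) : forall f : Z -> R,
  zsummable f -> zsummable (fun k => f (k - c)%Z) /\ zsum (fun k => f (k - c)%Z) = zsum f.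
Proof.
  induction c as [| c IH | c IH] using Z.peano_ind; intros f Hf.
  - split; [eapply zsummable_ext; [| exact Hf] | apply zsum_ext]; intro k; f_equal; lia.
  - destruct (IH f Hf) as [Hg Hsum]. destruct (zsummable_shift_1 _ Hg) as [Hg' Hsum'].
    split; [eapply zsummable_ext; [| exact Hg'] |]; [intro k; cbv beta; f_equal; lia |].
    rewrite <- Hsum, <- Hsum'. apply zsum_ext. intro k. f_equal. lia.
  - destruct (IH f Hf) as [Hg Hsum]. destruct (zsummable_shift_opp_1 _ Hg) as [Hg' Hsum'].
    split; [eapply zsummable_ext; [| exact Hg'] |]; [intro k; cbv beta; f_equal; lia |].
    rewrite <- Hsum, <- Hsum'. apply zsum_ext. intro k. f_equal. lia.
Qed.

Definition finite_var_law (p : Z -> R) : Prop :=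
  (forall k, 0 <= p k) /\ zsummable p /\ zsummable (fun k => IZR k * p k) /\
  zsummable (fun k => IZR k ^ 2 * p k) /\ zsum p = 1.

Lemma finite_var_law_ext (p q : Z -> R) :
  (forall k, p k = q k) -> finite_var_law p -> finite_var_law q.
Proof.
  intros H (Hnn & H0 & H1 & H2 & Hs).
  split; [intro k; rewrite <- H; apply Hnn |].
  split; [exact (zsummable_ext _ _ H H0) |].
  split; [eapply zsummable_ext; [| exact H1]; intro k; cbv beta; rewrite H; reflexivity |].
  split; [eapply zsummable_ext; [| exact H2]; intro k; cbv beta; rewrite H; reflexivity |].
  rewrite <- (zsum_ext _ _ H). exact Hs.
Qed.

Lemma mean_ext (p q : Z -> R) : (forall k, p k = q k) -> mean p = mean q.
Proof. intro H. apply zsum_ext. intro k. rewrite H. reflexivity. Qed.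

Definition second_moment (p : Z -> R) : R := zsum (fun k => IZR k ^ 2 * p k).

Lemma variance_second_moment (p : Z -> R) : finite_var_law p ->
  zsummable (fun k => (IZR k - mean p) ^ 2 * p k) /\ variance p = second_moment p - mean p ^ 2.
Proof.
  intros (_ & H0 & H1 & H2 & Hsum).
  set (mu := mean p).
  assert (E : forall k, (IZR k - mu) ^ 2 * p k
                        = (IZR k ^ 2 * p k + (-2 * mu) * (IZR k * p k)) + mu ^ 2 * p k)
    by (intro; ring).
  assert (Z1 : zsummable (fun k => IZR k ^ 2 * p k + (-2 * mu) * (IZR k * p k)))
    by (apply zsummable_plus; [| apply zsummable_scal]; assumption).
  assert (Z2 : zsummable (fun k => mu ^ 2 * p k)) by (apply zsummable_scal; assumption).
  split.
  - eapply zsummable_ext; [intro k; symmetry; apply E |]. apply zsummable_plus; assumption.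
  - unfold variance. fold mu. rewrite (zsum_ext _ _ E), !zsum_plus, !zsum_scal, Hsum
      by (try apply zsummable_scal; assumption).
    unfold second_moment, mu, mean. ring.
Qed.

Lemma variance_nonneg (p : Z -> R) : finite_var_law p -> 0 <= variance p.
Proof.
  intro Hp. destruct (variance_second_moment p Hp) as [[Hpos Hneg] _]. destruct Hp as (Hnn & _).
  unfold variance, zsum.
  apply Rplus_le_le_0_compat; apply Series_nonneg; try assumption;
    intro n; apply Rmult_le_pos; [apply pow2_ge_0 | apply Hnn | apply pow2_ge_0 | apply Hnn].
Qed.

Lemma finite_var_law_shift (q : Z -> R) (c : Z) : finite_var_law q ->
  finite_var_law (fun k => q (k - c)%Z) /\ mean (fun k => q (k - c)%Z) = mean q + IZR c /\
  second_moment (fun k => q (k - c)%Z) = second_moment q + 2 * IZR c * mean q + IZR c ^ 2.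
Proof.
  intros (Hnn & H0 & H1 & H2 & Hsum).
  destruct (zsummable_shift c _ H0) as [S0 T0].
  destruct (zsummable_shift c _ H1) as [S1 T1].
  destruct (zsummable_shift c _ H2) as [S2 T2].
  cbv beta in S1, S2, T1, T2.
  assert (E1 : forall k, IZR k * q (k - c)%Z = IZR (k - c) * q (k - c)%Z + IZR c * q (k - c)%Z)
    by (intro; rewrite minus_IZR; ring).
  assert (E2 : forall k, IZR k ^ 2 * q (k - c)%Z
                         = (IZR (k - c) ^ 2 * q (k - c)%Z + (2 * IZR c) * (IZR (k - c) * q (k - c)%Z))
                           + IZR c ^ 2 * q (k - c)%Z)
    by (intro; rewrite minus_IZR; ring).
  assert (Z1 : zsummable (fun k => IZR k * q (k - c)%Z)).
  { eapply zsummable_ext; [intro k; symmetry; apply E1 |].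
    apply zsummable_plus; [| apply zsummable_scal]; assumption. }
  assert (Z2 : zsummable (fun k => IZR k ^ 2 * q (k - c)%Z)).
  { eapply zsummable_ext; [intro k; symmetry; apply E2 |].
    apply zsummable_plus; [apply zsummable_plus |]; try apply zsummable_scal; assumption. }
  split; [| split].
  - split; [intro; apply Hnn |]. rewrite T0. auto.
  - unfold mean. rewrite (zsum_ext _ _ E1), zsum_plus, zsum_scal, T1, T0, Hsum
      by (try apply zsummable_scal; assumption).
    ring.
  - unfold second_moment. rewrite (zsum_ext _ _ E2), !zsum_plus, !zsum_scal, T2, T1, T0, Hsum
      by (try apply zsummable_plus; try apply zsummable_scal; assumption).
    unfold mean. ring.
Qed.

Lemma zsum_weighted_average (w q1 q2 p : Z -> R) : (forall k, p k = (q1 k + q2 k) / 2) ->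
  zsummable (fun k => w k * q1 k) -> zsummable (fun k => w k * q2 k) ->
  zsummable (fun k => w k * p k) /\
  zsum (fun k => w k * p k) = (zsum (fun k => w k * q1 k) + zsum (fun k => w k * q2 k)) / 2.
Proof.
  intros Hp Hw1 Hw2.
  assert (Hsplit : forall k, w k * p k = / 2 * (w k * q1 k) + / 2 * (w k * q2 k))
    by (intro; rewrite Hp; field).
  split.
  - eapply zsummable_ext; [intro k; symmetry; apply Hsplit |].
    apply zsummable_plus; apply zsummable_scal; assumption.
  - rewrite (zsum_ext _ _ Hsplit), zsum_plus, !zsum_scal by (apply zsummable_scal; assumption).
    field.
Qed.

Lemma finite_var_law_average (q1 q2 p : Z -> R) :
  finite_var_law q1 -> finite_var_law q2 -> (forall k, p k = (q1 k + q2 k) / 2) ->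
  finite_var_law p /\ mean p = (mean q1 + mean q2) / 2 /\
  second_moment p = (second_moment q1 + second_moment q2) / 2.
Proof.
  intros (Hnn1 & A0 & A1 & A2 & Hs1) (Hnn2 & B0 & B1 & B2 & Hs2) Hp.
  assert (Hunit : forall f : Z -> R, (forall k, f k = 1 * f k)) by (intros; ring).
  destruct (zsum_weighted_average (fun _ => 1) q1 q2 p Hp) as [C0 D0];
    try (eapply zsummable_ext; [apply Hunit | assumption]).
  destruct (zsum_weighted_average IZR q1 q2 p Hp A1 B1) as [C1 D1].
  destruct (zsum_weighted_average (fun k => IZR k ^ 2) q1 q2 p Hp A2 B2) as [C2 D2].
  rewrite <- !(zsum_ext _ _ (Hunit _)) in D0.
  split; [| split; [exact D1 | exact D2]].
  split; [intro k; rewrite Hp; specialize (Hnn1 k); specialize (Hnn2 k); lra |].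
  split; [eapply zsummable_ext; [intro k; symmetry; apply Hunit | exact C0] |].
  split; [exact C1 |]. split; [exact C2 |].
  rewrite D0, Hs1, Hs2. field.
Qed.

Lemma finite_var_law_mixture (q1 q2 p : Z -> R) (c1 c2 : Z) :
  finite_var_law q1 -> finite_var_law q2 -> (forall k, p k = (q1 (k - c1)%Z + q2 (k - c2)%Z) / 2) ->
  finite_var_law p /\
  is_mixture (mean p) (variance p) (mean q1 + IZR c1) (variance q1) (mean q2 + IZR c2) (variance q2).
Proof.
  intros Hq1 Hq2 Hp.
  destruct (finite_var_law_shift q1 c1 Hq1) as (Hs1 & Hm1 & Hv1).
  destruct (finite_var_law_shift q2 c2 Hq2) as (Hs2 & Hm2 & Hv2).
  destruct (finite_var_law_average _ _ p Hs1 Hs2 Hp) as (Hlaw & Hm & Hv).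
  split; [exact Hlaw |]. split; [rewrite Hm, Hm1, Hm2; reflexivity |].
  rewrite (proj2 (variance_second_moment p Hlaw)), (proj2 (variance_second_moment q1 Hq1)),
    (proj2 (variance_second_moment q2 Hq2)), Hv, Hv1, Hv2, Hm, Hm1, Hm2.
  field.
Qed.

Lemma delta0_law : finite_var_law delta0 /\ mean delta0 = 0.
Proof.
  assert (Hoff : forall k, k <> 0%Z -> delta0 k = 0)
    by (intros k Hk; unfold delta0, indicator; destruct (Z.eqb_spec 0 k); [lia | reflexivity]).
  assert (Hpos : forall j, delta0 (Z.of_nat (S j)) = 0) by (intro; apply Hoff; lia).
  assert (Hneg : forall j, delta0 (- Z.of_nat (S j))%Z = 0) by (intro; apply Hoff; lia).
  assert (Hm : forall i, (0 < i)%nat -> forall k, IZR k ^ i * delta0 k = 0).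
  { intros i Hi k. unfold delta0, indicator. destruct (Z.eqb_spec 0 k) as [<- |]; [| ring].
    rewrite pow_i by exact Hi. ring. }
  assert (Hm1 : forall k, IZR k * delta0 k = 0) by (intro k; rewrite <- (Hm 1%nat Nat.lt_0_1 k); ring).
  destruct (zsummable_zero _ Hm1) as [Z1 S1].
  destruct (zsummable_zero _ (Hm 2%nat ltac:(lia))) as [Z2 _].
  assert (Ep : ex_series (fun j => delta0 (Z.of_nat j)))
    by (apply (ex_series_eventually_zero _ 1); intros [| n] Hn; [lia | apply Hpos]).
  split; [| exact S1].
  split; [intro k; unfold delta0, indicator; destruct Z.eqb; lra |].
  split; [split; [exact Ep | eexists; apply is_series_eq_zero, Hneg] |].
  split; [exact Z1 |]. split; [exact Z2 |].
  unfold zsum.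
  rewrite (Series_incr_1 _ Ep), !(is_series_unique _ 0) by (apply is_series_eq_zero; assumption).
  unfold delta0, indicator. simpl. ring.
Qed.

Lemma beta1_nonpos (j : nat) : beta1 (- Z.of_nat (S j))%Z = 3 / 16 * (1 / 2) ^ j.
Proof.
  unfold beta1.
  destruct (Z.leb_spec 2 (- Z.of_nat (S j))), (Z.eqb_spec (- Z.of_nat (S j)) 1); try lia.
  replace (Z.to_nat (3 - - Z.of_nat (S j))) with (j + 4)%nat by lia.
  rewrite pow_add, Rdiv_1_l, pow_inv. simpl pow. field. apply pow_nonzero. lra.
Qed.

Lemma beta1_ge_2 (n : nat) : (2 <= n)%nat -> beta1 (Z.of_nat n) = 0.
Proof. intro H. unfold beta1. destruct (Z.leb_spec 2 (Z.of_nat n)); [reflexivity | lia]. Qed.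

Lemma sq_succ_half_pow_le (j : nat) : (INR j + 1) ^ 2 * (1 / 2) ^ j <= 16 * (25 / 32) ^ j.
Proof.
  assert (Hbern : 1 + INR j / 4 <= (5 / 4) ^ j).
  { induction j as [| j IH]; [simpl; lra |]. rewrite S_INR. simpl. pose proof (pos_INR j). nra. }
  pose proof (pos_INR j).
  assert ((INR j + 1) ^ 2 <= (4 * (5 / 4) ^ j) ^ 2) by (apply pow_incr; lra).
  replace (25 / 32) with (5 / 4 * (5 / 4) * (1 / 2)) by field.
  rewrite !Rpow_mult_distr.
  assert (0 < (1 / 2) ^ j) by (apply pow_lt; lra).
  replace ((4 * (5 / 4) ^ j) ^ 2) with (16 * ((5 / 4) ^ j * (5 / 4) ^ j)) in * by ring.
  nra.
Qed.

Lemma beta1_moment_zsummable (i : nat) : (i <= 2)%nat -> zsummable (fun k => IZR k ^ i * beta1 k).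
Proof.
  intro Hi. split.
  - apply (ex_series_eventually_zero _ 2). intros n Hn. rewrite beta1_ge_2 by lia. ring.
  - apply (ex_series_le (V := R_CompleteNormedModule) _ (fun j => 16 * (25 / 32) ^ j)).
    + intro j. change (norm ?x) with (Rabs x).
      rewrite beta1_nonpos, opp_IZR, <- INR_IZR_INZ, S_INR.
      assert (Hx : 1 <= INR j + 1) by (pose proof (pos_INR j); lra).
      assert (Hp : 0 < (1 / 2) ^ j) by (apply pow_lt; lra).
      rewrite Rabs_mult, <- RPow_abs, Rabs_Ropp, (Rabs_right (INR j + 1)), (Rabs_right (3 / 16 * _))
        by lra.
      eapply Rle_trans; [| apply sq_succ_half_pow_le].
      assert ((INR j + 1) ^ i <= (INR j + 1) ^ 2) by (apply Rle_pow; [lra | exact Hi]).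
      assert (0 <= (INR j + 1) ^ i) by (apply pow_le; lra).
      nra.
    + apply (ex_series_scal_l (V := R_NormedModule)). eexists. apply is_series_geom.
      rewrite Rabs_right; lra.
Qed.

Lemma beta1_law : finite_var_law beta1.
Proof.
  pose proof (beta1_moment_zsummable 0 ltac:(lia)) as Z0.
  pose proof (beta1_moment_zsummable 1 ltac:(lia)) as Z1.
  pose proof (beta1_moment_zsummable 2 ltac:(lia)) as Z2.
  apply (zsummable_ext _ beta1) in Z0; [| intro; simpl; ring].
  apply (zsummable_ext _ (fun k => IZR k * beta1 k)) in Z1; [| intro; simpl; ring].
  split; [intro; apply beta1_between |]. do 3 (split; [assumption |]).
  destruct Z0 as [Hp Hn]. unfold zsum.
  rewrite (Series_incr_1 _ Hp), (Series_incr_1 _ (proj1 (ex_series_incr_1 _) Hp)).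
  rewrite (is_series_unique (fun k => beta1 (Z.of_nat (S (S k)))) 0)
    by (apply is_series_eq_zero; intro; apply beta1_ge_2; lia).
  rewrite (Series_ext _ (fun j => 3 / 16 * (1 / 2) ^ j)) by (intro; apply beta1_nonpos).
  rewrite Series_scal_l, (is_series_unique _ 2).
  - unfold beta1. simpl. field.
  - pose proof (is_series_geom (1 / 2) ltac:(rewrite Rabs_right; lra)) as H.
    replace (/ (1 - 1 / 2)) with 2 in H by field. exact H.
Qed.

(** * Means and variances *)

Lemma law_alpha_double (s : nat) : finite_var_law (a_dens s) -> finite_var_law (b_dens s) ->
  finite_var_law (a_dens (2 * s)) /\
  is_mixture (m_alpha (2 * s)) (v_alpha (2 * s)) (m_alpha s) (v_alpha s) (m_beta s) (v_beta s).
Proof.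
  intros Ha Hb.
  destruct (finite_var_law_mixture _ _ (a_dens (2 * s)) 0 0 Ha Hb) as [Hlaw Hmix];
    [intro k; rewrite a_dens_double, !Z.sub_0_r; reflexivity |].
  change (IZR 0) with 0 in Hmix. rewrite !Rplus_0_r in Hmix. split; assumption.
Qed.

Lemma law_beta_double (s : nat) : finite_var_law (a_dens s) -> finite_var_law (b_dens s) ->
  finite_var_law (b_dens (2 * s)) /\
  is_mixture (m_beta (2 * s)) (v_beta (2 * s))
    (m_alpha s + IZR (parity s)) (v_alpha s) (m_beta s - IZR (parity s)) (v_beta s).
Proof.
  intros Ha Hb.
  destruct (finite_var_law_mixture _ _ (b_dens (2 * s)) (parity s) (- parity s) Ha Hb)
    as [Hlaw Hmix];
    [intro k; rewrite b_dens_double, Z.sub_opp_r; reflexivity |].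
  rewrite opp_IZR in Hmix. split; assumption.
Qed.

Lemma law_alpha_double_succ (s : nat) : finite_var_law (a_dens s) -> finite_var_law (b_dens s) ->
  finite_var_law (a_dens (2 * s + 1)) /\
  is_mixture (m_alpha (2 * s + 1)) (v_alpha (2 * s + 1))
    (m_alpha s + IZR (parity s)) (v_alpha s) (m_beta s + (1 - IZR (parity s))) (v_beta s).
Proof.
  intros Ha Hb.
  destruct (finite_var_law_mixture _ _ (a_dens (2 * s + 1)) (parity s) (1 - parity s) Ha Hb)
    as [Hlaw Hmix];
    [intro k; apply a_dens_double_succ |].
  rewrite minus_IZR in Hmix. split; assumption.
Qed.

Lemma law_beta_double_succ (s : nat) :
  finite_var_law (a_dens (s + 1)) -> finite_var_law (b_dens (s + 1)) ->
  finite_var_law (b_dens (2 * s + 1)) /\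
  is_mixture (m_beta (2 * s + 1)) (v_beta (2 * s + 1))
    (m_alpha (s + 1)) (v_alpha (s + 1)) (m_beta (s + 1) - 1) (v_beta (s + 1)).
Proof.
  intros Ha Hb.
  destruct (finite_var_law_mixture _ _ (b_dens (2 * s + 1)) 0 (-1) Ha Hb) as [Hlaw Hmix];
    [intro k; replace (k - 0)%Z with k by lia; replace (k - -1)%Z with (k + 1)%Z by lia;
     apply b_dens_double_succ |].
  change (IZR 0) with 0 in Hmix. change (IZR (-1)) with (-1) in Hmix.
  rewrite Rplus_0_r in Hmix. split; assumption.
Qed.

Lemma dens_laws (t : nat) : finite_var_law (a_dens t) /\ finite_var_law (b_dens t).
Proof.
  induction t as [t IH] using (well_founded_induction lt_wf).
  destruct (Nat.Even_or_Odd t) as [[s ->] | [s ->]].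
  - destruct (Nat.eq_dec s 0) as [-> | Hs].
    + destruct delta0_law as [Hd _].
      split; (eapply finite_var_law_ext; [| exact Hd]); intro k; symmetry;
        [apply a_dens_zero | apply b_dens_zero].
    + destruct (IH s ltac:(lia)) as [Ha Hb].
      split; [apply law_alpha_double | apply law_beta_double]; assumption.
  - destruct (IH s ltac:(lia)) as [Ha Hb].
    split; [apply law_alpha_double_succ; assumption |].
    destruct (Nat.eq_dec s 0) as [-> | Hs].
    + eapply finite_var_law_ext; [| exact beta1_law]. intro k. symmetry. apply b_dens_one.
    + destruct (IH (s + 1)%nat ltac:(lia)) as [Ha' Hb'].
      apply law_beta_double_succ; assumption.
Qed.

Lemma moments_alpha_double (s : nat) :
  is_mixture (m_alpha (2 * s)) (v_alpha (2 * s)) (m_alpha s) (v_alpha s) (m_beta s) (v_beta s).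
Proof. destruct (dens_laws s) as [Ha Hb]. exact (proj2 (law_alpha_double s Ha Hb)). Qed.

Lemma moments_beta_double (s : nat) :
  is_mixture (m_beta (2 * s)) (v_beta (2 * s))
    (m_alpha s + IZR (parity s)) (v_alpha s) (m_beta s - IZR (parity s)) (v_beta s).
Proof. destruct (dens_laws s) as [Ha Hb]. exact (proj2 (law_beta_double s Ha Hb)). Qed.

Lemma moments_alpha_double_succ (s : nat) :
  is_mixture (m_alpha (2 * s + 1)) (v_alpha (2 * s + 1))
    (m_alpha s + IZR (parity s)) (v_alpha s) (m_beta s + (1 - IZR (parity s))) (v_beta s).
Proof. destruct (dens_laws s) as [Ha Hb]. exact (proj2 (law_alpha_double_succ s Ha Hb)). Qed.

Lemma moments_beta_double_succ (s : nat) :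
  is_mixture (m_beta (2 * s + 1)) (v_beta (2 * s + 1))
    (m_alpha (s + 1)) (v_alpha (s + 1)) (m_beta (s + 1) - 1) (v_beta (s + 1)).
Proof. destruct (dens_laws (s + 1)) as [Ha Hb]. exact (proj2 (law_beta_double_succ s Ha Hb)). Qed.

Lemma means_eq (t : nat) : m_alpha t = IZR (parity t) / 2 /\ m_beta t = - IZR (parity t) / 2.
Proof.
  induction t as [t IH] using (well_founded_induction lt_wf).
  destruct (Nat.Even_or_Odd t) as [[s ->] | [s ->]];
    [rewrite parity_double | rewrite parity_double_succ].
  - destruct (Nat.eq_dec s 0) as [-> | Hs].
    + destruct delta0_law as [_ Hm]. change (2 * 0)%nat with 0%nat. unfold m_alpha, m_beta.
      rewrite (mean_ext _ _ a_dens_zero), (mean_ext _ _ b_dens_zero), Hm. split; lra.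
    + destruct (IH s ltac:(lia)) as [Ha Hb].
      destruct (moments_alpha_double s) as [Hma _]. destruct (moments_beta_double s) as [Hmb _].
      split; lra.
  - destruct (IH s ltac:(lia)) as [Ha Hb].
    destruct (moments_alpha_double_succ s) as [Hma _].
    destruct (moments_beta_double_succ s) as [Hmb _].
    assert (Hodd : m_alpha (2 * s + 1) = 1 / 2) by lra.
    split; [lra |].
    destruct (Nat.eq_dec s 0) as [-> | Hs].
    + change (2 * 0 + 1)%nat with 1%nat in *. change (0 + 1)%nat with 1%nat in *. lra.
    + destruct (IH (s + 1)%nat ltac:(lia)) as [Ha' Hb']. lra.
Qed.

Definition v_avg (t : nat) : R := (v_alpha t + v_beta t) / 2.

Lemma variances_double (s : nat) :
  v_alpha (2 * s) = v_avg s + IZR (parity s) / 4 /\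
  v_beta (2 * s) = v_avg s + 9 * IZR (parity s) / 4.
Proof.
  destruct (moments_alpha_double s) as [_ Hva]. destruct (moments_beta_double s) as [_ Hvb].
  destruct (means_eq s) as [Hma Hmb]. rewrite Hva, Hvb, Hma, Hmb. unfold v_avg.
  destruct (parity_cases s) as [[-> _] | [-> _]]; split; field.
Qed.

Lemma variances_double_succ (s : nat) :
  v_alpha (2 * s + 1) = v_avg s + ((3 * IZR (parity s) - 1) / 2) ^ 2 /\
  v_beta (2 * s + 1) = v_avg (s + 1) + ((2 - IZR (parity s)) / 2) ^ 2.
Proof.
  destruct (moments_alpha_double_succ s) as [_ Hva].
  destruct (moments_beta_double_succ s) as [_ Hvb].
  destruct (means_eq s) as [Hma Hmb]. destruct (means_eq (s + 1)) as [Hma' Hmb'].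
  rewrite Hva, Hvb, Hma, Hmb, Hma', Hmb'. unfold v_avg.
  destruct (parity_cases s) as [[-> ->] | [-> ->]]; split; field.
Qed.

Lemma v_avg_step_bound (t : nat) : Rabs (v_avg (t + 1) - v_avg t) <= 5 / 4.
Proof.
  induction t as [t IH] using (well_founded_induction lt_wf).
  assert (Hodd : forall s, v_avg (2 * s + 1) = (v_avg s + v_avg (s + 1)) / 2 + 5 / 8).
  { intro s. unfold v_avg at 1. destruct (variances_double_succ s) as [-> ->].
    destruct (parity_cases s) as [[-> _] | [-> _]]; field. }
  assert (Heven : forall s, v_avg (2 * s) = v_avg s + 5 * IZR (parity s) / 4).
  { intro s. unfold v_avg at 1. destruct (variances_double s) as [-> ->]. field. }
  apply Rabs_le.
  destruct (Nat.Even_or_Odd t) as [[s ->] | [s ->]].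
  - rewrite Hodd, Heven.
    destruct (Nat.eq_dec s 0) as [-> | Hs].
    + pose proof (Hodd 0%nat) as H1. change (2 * 0 + 1)%nat with 1%nat in H1.
      change (0 + 1)%nat with 1%nat in *. change (parity 0) with 0%Z. lra.
    + pose proof (IH s ltac:(lia)) as Hs'. apply Rabs_le_between in Hs'.
      destruct (parity_cases s) as [[-> _] | [-> _]]; lra.
  - replace (2 * s + 1 + 1)%nat with (2 * (s + 1))%nat by lia.
    rewrite Hodd, Heven.
    pose proof (IH s ltac:(lia)) as Hs'. apply Rabs_le_between in Hs'.
    destruct (parity_cases s) as [[_ ->] | [_ ->]]; lra.
Qed.

Lemma variance_gap_bound (t : nat) : Rabs (v_alpha t - v_beta t) <= 2.
Proof.
  apply Rabs_le.
  destruct (Nat.Even_or_Odd t) as [[s ->] | [s ->]].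
  - destruct (variances_double s) as [-> ->]. destruct (parity_cases s) as [[-> _] | [-> _]]; lra.
  - destruct (variances_double_succ s) as [-> ->].
    pose proof (v_avg_step_bound s) as Hs. apply Rabs_le_between in Hs.
    destruct (parity_cases s) as [[-> _] | [-> _]]; lra.
Qed.

(** * The vector X_t *)

Lemma star_mixture_bound (s : nat) (c1 c2 M V th : R) :
  is_mixture M V (m_alpha s + c1) (v_alpha s) (m_beta s + c2) (v_beta s) ->
  Rabs c1 <= 1 -> Rabs c2 <= 1 ->
  Cmod (normal_cf M V th
        - / 2 * (ee (c1 * th) * alpha_star s th + ee (c2 * th) * beta_star s th))%C
  <= 16 * Rabs th ^ 3.
Proof.
  intros Hmix Hc1 Hc2.
  change (alpha_star s th) with (normal_cf (m_alpha s) (v_alpha s) th).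
  change (beta_star s th) with (normal_cf (m_beta s) (v_beta s) th).
  rewrite !ee_mul_normal_cf.
  destruct (dens_laws s) as [Ha Hb]. destruct (means_eq s) as [Hma Hmb].
  apply normal_cf_mixture_bound;
    [exact Hmix | apply variance_nonneg, Ha | apply variance_nonneg, Hb | | apply variance_gap_bound].
  apply Rabs_le_between in Hc1, Hc2. apply Rabs_le.
  rewrite Hma, Hmb. destruct (parity_cases s) as [[-> _] | [-> _]]; lra.
Qed.

Definition alpha_double_defect (s : nat) (th : R) : C :=
  (alpha_star (2 * s) th - / 2 * (alpha_star s th + beta_star s th))%C.

Definition beta_double_defect (s : nat) (th : R) : C :=
  (beta_star (2 * s) th
   - / 2 * (ee (IZR (parity s) * th) * alpha_star s th
            + ee (- IZR (parity s) * th) * beta_star s th))%C.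

Definition alpha_double_succ_defect (s : nat) (th : R) : C :=
  (alpha_star (2 * s + 1) th
   - / 2 * (ee (IZR (parity s) * th) * alpha_star s th
            + ee ((1 - IZR (parity s)) * th) * beta_star s th))%C.

Definition beta_double_succ_defect (s : nat) (th : R) : C :=
  (beta_star (2 * s + 1) th
   - / 2 * (alpha_star (s + 1) th + ee (- th) * beta_star (s + 1) th))%C.

Lemma Rabs_IZR_parity_le_1 (s : nat) : Rabs (IZR (parity s)) <= 1.
Proof. destruct (parity_cases s) as [[-> _] | [-> _]]; rewrite ?Rabs_R0, ?Rabs_R1; lra. Qed.

Lemma alpha_double_defect_bound (s : nat) (th : R) :
  Cmod (alpha_double_defect s th) <= 16 * Rabs th ^ 3.
Proof.
  unfold alpha_double_defect.
  replace (alpha_star s th + beta_star s th)%C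
    with (ee (0 * th) * alpha_star s th + ee (0 * th) * beta_star s th)%C
    by (rewrite ee_zero_mul; ring).
  apply star_mixture_bound; rewrite ?Rabs_R0; [| lra | lra].
  rewrite !Rplus_0_r. apply moments_alpha_double.
Qed.

Lemma beta_double_defect_bound (s : nat) (th : R) :
  Cmod (beta_double_defect s th) <= 16 * Rabs th ^ 3.
Proof.
  apply star_mixture_bound; [apply moments_beta_double | | rewrite Rabs_Ropp];
    apply Rabs_IZR_parity_le_1.
Qed.

Lemma alpha_double_succ_defect_bound (s : nat) (th : R) :
  Cmod (alpha_double_succ_defect s th) <= 16 * Rabs th ^ 3.
Proof.
  apply star_mixture_bound; [apply moments_alpha_double_succ | apply Rabs_IZR_parity_le_1 |].
  destruct (parity_cases s) as [[-> _] | [-> _]];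
    rewrite ?Rminus_0_r, ?Rminus_diag, ?Rabs_R0, ?Rabs_R1; lra.
Qed.

Lemma beta_double_succ_defect_bound (s : nat) (th : R) :
  Cmod (beta_double_succ_defect s th) <= 16 * Rabs th ^ 3.
Proof.
  unfold beta_double_succ_defect.
  replace (alpha_star (s + 1) th + ee (- th) * beta_star (s + 1) th)%C
    with (ee (0 * th) * alpha_star (s + 1) th + ee (-1 * th) * beta_star (s + 1) th)%C
    by (rewrite ee_zero_mul; replace (-1 * th) with (- th) by ring; ring).
  apply star_mixture_bound; rewrite ?Rabs_R0, ?Rabs_m1; [| lra | lra].
  rewrite Rplus_0_r. apply moments_beta_double_succ.
Qed.

Lemma X_eq_defects (n : nat) (th : R) (i : nat) :
  X n th i = row6 (alpha_double_defect n th) (beta_double_defect n th)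
                  (alpha_double_succ_defect n th) (beta_double_succ_defect n th)
                  (alpha_double_defect (n + 1) th) (beta_double_defect (n + 1) th) i.
Proof.
  unfold X, alpha_double_defect, beta_double_defect, alpha_double_succ_defect,
    beta_double_succ_defect.
  destruct (Nat.Even_or_Odd n) as [[u ->] | [u ->]].
  - rewrite Nat.even_even, Nat.div2_double, parity_double, (parity_double_succ u).
    replace (2 * (2 * u + 1))%nat with (2 * (2 * u) + 2)%nat by lia.
    destruct i as [| [| [| [| [| i]]]]]; unfold mv6, D0, row6, S_star; cbv beta iota zeta;
      change (IZR 0) with 0; change (IZR 1) with 1;
      rewrite ?Ropp_0, ?Rminus_0_r, ?ee_zero_mul, ?ee_one_mul, ?ee_opp_one_mul, ?ee_opp; ring.
  - rewrite Nat.even_odd, Nat.div2_odd', parity_double_succ.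
    replace (2 * u + 1 + 1)%nat with (2 * (u + 1))%nat by lia. rewrite parity_double.
    destruct i as [| [| [| [| [| i]]]]]; unfold mv6, D1, row6, S_star; cbv beta iota zeta;
      replace (2 * u + 2)%nat with (2 * (u + 1))%nat by lia;
      replace (2 * (2 * u + 1) + 2)%nat with (2 * (2 * (u + 1)))%nat by lia;
      change (IZR 0) with 0; change (IZR 1) with 1;
      rewrite ?Ropp_0, ?Rminus_diag, ?ee_zero_mul, ?ee_one_mul, ?ee_opp_one_mul, ?ee_opp; ring.
Qed.

Theorem lemma3p7 :
  exists Cst : R, forall (t : nat) (th : R),
    Rabs th <= PI -> maxnorm6 (X t th) <= Cst * Rabs th ^ 3.
Proof.
  exists 16. intros t th _.
  unfold maxnorm6. rewrite !X_eq_defects. cbn [row6].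
  repeat apply Rmax_lub;
    auto using alpha_double_defect_bound, beta_double_defect_bound,
      alpha_double_succ_defect_bound, beta_double_succ_defect_bound.
Qed.
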